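(* (i) The cyclic Kautz digraph $CK(3,\ell)$ with $\ell\ge 3$, $\ell\neq 4$, has diameter $2\ell-1$, and for every $d\ge 3$ the cyclic Kautz digraph $CK(d,3)$ has diameter $2\cdot 3-1=5$. (ii) The cyclic Kautz digraph $CK(3,4)$ has diameter $6$.
   Context: The cyclic Kautz digraph $CK(d,\ell)$ has vertex set $\{x_1\ldots x_\ell\in\mathbb Z_{d+1}^\ell : x_i\neq x_{i+1}\ (1\le i\le \ell-1),\ x_\ell\neq x_1\}$ and arcs $x_1x_2\ldots x_\ell\to x_2\ldots x_\ell y$ for every $y\in\mathbb Z_{d+1}$ with $y\neq x_2,x_\ell$. The diameter is the maximum directed distance between ordered pairs of vertices. *)

From mathcomp Require Import all_boot.
Unset Printing Implicit Defensive.

(* Words over the alphabet Z_{d+1} = 'I_d.+1, represented as sequences. *)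

Definition ck_vertex (d l : nat) (x : seq 'I_d.+1) : bool :=
  [&& size x == l,
      all (fun i => nth ord0 x i != nth ord0 x i.+1) (iota 0 l.-1)
    & nth ord0 x l.-1 != nth ord0 x 0].

Definition ck_arc (d l : nat) (x z : seq 'I_d.+1) : bool :=
  [&& ck_vertex d l x, ck_vertex d l z &
      [exists y : 'I_d.+1,
         [&& y != nth ord0 x 1, y != nth ord0 x l.-1 & z == rcons (behead x) y]]].

Fixpoint walk_le (d l k : nat) (x z : seq 'I_d.+1) : Prop :=
  match k with
  | 0 => x = z
  | k'.+1 => x = z \/ exists w, ck_arc d l x w /\ walk_le d l k' w z
  end.

Definition ck_diameter (d l D : nat) : Prop :=
  (forall x z, ck_vertex d l x -> ck_vertex d l z -> walk_le d l D x z) /\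
  (exists x z, [/\ ck_vertex d l x, ck_vertex d l z &
                   forall k, k < D -> ~ walk_le d l k x z]).

(* A walk of length k from x to z in CK(d,l) is a word c_0 ... c_{l+k-1} that
   starts with x, ends with z, and in which every symbol c_j with j >= l differs
   from c_{j-1} and from c_{j-l+1}; the vertices of the walk are the windows of
   length l of this word.

   Upper bound: put between x and z a word of length l-1 (or of length l-2, then
   overlapping z by one position).  Built from right to left, each of its
   symbols must avoid at most three values, and d + 1 >= 4 symbols are
   available; which of the two shapes works depends only on coincidences among
   x_2, x_l, z_1 and z_2.

   Lower bound: for explicit pairs of nearly alternating vertices, a case
   analysis on k < 2l - 1 always finds a symbol of the word equal to a symbol
   it must avoid; in the hardest case (d = 3) the symbols of the middle block
   are forced one by one and the last of them collides with z.  CK(3,4), where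
   the diameter is 2l - 2 = 6, is settled by exhaustive search. *)

From mathcomp Require Import all_boot zify.

Ltac case_ifs := repeat (case: ifP => ?; try (exfalso; lia)).

(* [c j] may follow the window [c (j - l)], ..., [c (j - 1)] along an arc: it
   differs from the last and from the second symbol of that window. *)
Definition fresh_at {T : eqType} (l : nat) (c : nat -> T) (j : nat) : bool :=
  (c j != c j.-1) && (c j != c (j - l + 1)).

Section Walks.
Variables d l : nat.
Implicit Types (x z : seq 'I_d.+1) (c : nat -> 'I_d.+1).

Lemma ck_vertexP x : ck_vertex d l x <->
  [/\ size x = l, forall i, i.+1 < l -> nth ord0 x i != nth ord0 x i.+1
    & nth ord0 x l.-1 != nth ord0 x 0].
Proof.
split=> [/and3P[/eqP sx /allP hx hl]|[sx hx hl]].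
  by split=> // i hi; apply: hx; rewrite mem_iota; lia.
by rewrite /ck_vertex sx eqxx hl andbT; apply/allP => i; rewrite mem_iota => hi; apply: hx; lia.
Qed.

Lemma walk_leS k x z : walk_le d l k x z -> walk_le d l k.+1 x z.
Proof.
elim: k x => [|k IH] x /=; first by left.
by case=> [->|[w [xw wz]]]; [left | right; exists w; split; last apply: IH].
Qed.

Lemma walk_le_mono k k' x z : k <= k' -> walk_le d l k x z -> walk_le d l k' x z.
Proof.
move=> /subnK <-; elim: (k' - k) => [//|n IH] /IH.
by rewrite addSn; apply: walk_leS.
Qed.

Definition window c t := mkseq (fun i => c (t + i)) l.

Lemma nth_window c t i : i < l -> nth ord0 (window c t) i = c (t + i).
Proof. by move=> hi; rewrite nth_mkseq. Qed.

Lemma window_eq c t x : size x = l ->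
  (forall i, i < l -> c (t + i) = nth ord0 x i) -> window c t = x.
Proof.
move=> sx cx; apply: (@eq_from_nth _ ord0); rewrite size_mkseq // => i hi.
by rewrite nth_window ?cx.
Qed.

Lemma ck_arc_window c t : 2 <= l -> ck_vertex d l (window c t) -> fresh_at l c (t + l) ->
  ck_vertex d l (window c t.+1) /\ ck_arc d l (window c t) (window c t.+1).
Proof.
move=> hl vt0 /andP[new_last new_second].
have [_ adj _] := (ck_vertexP _).1 vt0.
rewrite (_ : (t + l).-1 = t + l.-1) in new_last; last lia.
rewrite (_ : t + l - l + 1 = t + 1) in new_second; last lia.
have vt1 : ck_vertex d l (window c t.+1).
  apply/ck_vertexP; split; first by rewrite size_mkseq.
    move=> i hi; rewrite !nth_window; try lia.
    have [hi2|hi2] := ltnP i.+2 l; first by have := adj _ hi2; rewrite !nth_window ?addSnnS.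
    have -> : t.+1 + i.+1 = t + l by lia.
    have -> : t.+1 + i = t + l.-1 by lia.
    by rewrite eq_sym.
  rewrite !nth_window; try lia.
  have -> : t.+1 + l.-1 = t + l by lia.
  by rewrite addn0 -[t.+1]addn1.
split=> //; rewrite /ck_arc vt0 vt1; apply/existsP; exists (c (t + l)).
rewrite !nth_window; try lia.
rewrite new_last new_second; apply/eqP/window_eq.
  by rewrite size_rcons size_behead size_mkseq; lia.
move=> i hi; rewrite nth_rcons size_behead size_mkseq.
case: ltnP => hi2; first by rewrite nth_behead nth_window ?addSnnS //; lia.
have -> : i = l.-1 by lia.
by rewrite eqxx; congr c; lia.
Qed.

Lemma walk_le_window c t k : 2 <= l -> ck_vertex d l (window c t) ->
  (forall j, t + l <= j < t + l + k -> fresh_at l c j) ->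
  walk_le d l k (window c t) (window c (t + k)).
Proof.
move=> hl; elim: k t => [|k IH] t vt fresh /=; first by rewrite addn0.
have [vt1 arc1] := @ck_arc_window c t hl vt (fresh (t + l) (ltac:(lia))).
right; exists (window c t.+1); split=> //.
by rewrite -addSnnS; apply: IH => // j hj; apply: fresh; lia.
Qed.

Lemma walk_le_string k x z : 2 <= l -> ck_vertex d l x -> walk_le d l k x z ->
  exists2 k', k' <= k & exists c,
    [/\ forall i, i < l -> c i = nth ord0 x i,
        forall i, i < l -> c (k' + i) = nth ord0 z i
      & forall j, l <= j < l + k' -> fresh_at l c j].
Proof.
move=> hl vx.
have stay k0 : exists2 k', k' <= k0 & exists c,
    [/\ forall i, i < l -> c i = nth ord0 z i,
        forall i, i < l -> c (k' + i) = nth ord0 z i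
      & forall j, l <= j < l + k' -> fresh_at l c j].
  by exists 0 => //; exists (nth ord0 z); split=> // j; lia.
elim: k x vx => [|k IH] x vx /=; first by move=> ->.
case=> [-> //|[w [/and3P[_ vw /existsP[y /and3P[y_second y_last /eqP def_w]]] wz]]].
have [k' le_k'k [c [cw cz fresh]]] := IH _ vw wz.
have [sx _ _] := (ck_vertexP _).1 vx.
have cw' i : i < l -> c i = if i < l.-1 then nth ord0 x i.+1 else y.
  move=> hi; rewrite cw // def_w nth_rcons size_behead sx.
  case: ltnP => hi2; first by rewrite nth_behead.
  have -> : i = l.-1 by lia.
  by rewrite eqxx.
exists k'.+1; first by [].
pose c' j := if j is j'.+1 then c j' else nth ord0 x 0.
have c'E j : 0 < j -> c' j = c j.-1 by case: j.
exists c'; split.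
- by case=> [//|i] hi; rewrite c'E // cw'; [case: ifP => //; lia | lia].
- by move=> i hi; rewrite c'E ?addSn ?cz.
move=> j /andP[lj jl]; rewrite /fresh_at !c'E; try lia.
have [jl1|jl1] := eqVneq j l.
  rewrite jl1 (_ : (l - l + 1).-1 = 0) ?(_ : l.-1.-1 = l.-2) ?cw'; try lia.
  have -> : l.-2 < l.-1 by lia.
  have -> : 0 < l.-1 by lia.
  have -> : l.-2.+1 = l.-1 by lia.
  by rewrite ltnn y_last y_second.
have := fresh j.-1 (ltac:(lia)); rewrite /fresh_at.
by have -> : j.-1 - l + 1 = (j - l + 1).-1 by lia.
Qed.
End Walks.

Lemma exists_avoid3 {d} (a b c : 'I_d.+1) : 3 <= d ->
  exists y : 'I_d.+1, [&& y != a, y != b & y != c].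
Proof.
move=> hd; case: (pickP [predC [:: a; b; c]]) => [y | all_in].
  by rewrite !inE !negb_or => ?; exists y.
have : {subset enum 'I_d.+1 <= [:: a; b; c]}.
  by move=> y _; apply/negPn; rewrite -[_ \notin _]/([predC [:: a; b; c]] y) all_in.
by move/(uniq_leq_size (enum_uniq _)); rewrite size_enum_ord /=; lia.
Qed.

(* Built backwards from the last symbol, so that each symbol has to avoid only
   three values: [a i], [b i] and its successor (or [e]). *)
Lemma exists_avoiding_word {d} (a b : nat -> 'I_d.+1) (u e : 'I_d.+1) n :
  3 <= d -> 0 < n -> [|| u == a 0, u == b 0 | a 0 == b 0] ->
  exists w : nat -> 'I_d.+1,
    [/\ forall i, i < n -> (w i != a i) && (w i != b i),
        forall i, 0 < i < n -> w i != w i.-1,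
        w 0 != u & w n.-1 != e].
Proof.
move=> hd; elim: n e => [//|[|n] IH] e _ start.
  have [p [q cover]] : exists p q,
      forall y, y != p -> y != q -> [&& y != u, y != a 0 & y != b 0].
    case/or3P: start => /eqP ->;
      [exists (a 0), (b 0) | exists (a 0), (b 0) | exists (b 0), u];
      by move=> y /negbTE -> /negbTE ->.
  have [y /and3P[yp yq ye]] := exists_avoid3 p q e hd.
  have /and3P[yu ya yb] := cover y yp yq.
  exists (fun _ => y); split=> // [[|i] hi|i]; [by rewrite ya yb | lia | lia].
have [y /and3P[ya yb ye]] := exists_avoid3 (a n.+1) (b n.+1) e hd.
have [w [wab wadj w0 wlast]] := IH y (ltn0Sn _) start.
exists (fun i => if i == n.+1 then y else w i); split=> //=.
- by move=> i hi; case: (eqVneq i n.+1) => [->|ne] /=; [rewrite ya yb | apply: wab; lia].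
- move=> i hi; case: (eqVneq i n.+1) => [->|ne] /=; first by rewrite ltn_eqF // eq_sym.
  by rewrite ifN; [apply: wadj | apply/eqP]; lia.
by rewrite eqxx.
Qed.

(* Closes [f a != g b] with a hypothesis [forall i j, _ -> j = _ -> f i != g j]:
   stating the facts with index equations leaves the index arithmetic to lia. *)
Ltac ne_by_index :=
  match goal with
  | H : forall _ _, _ |- is_true (_ != _) => solve [apply: H; lia | rewrite eq_sym; apply: H; lia]
  end.

Section UpperBound.
Variables (d l : nat) (x z : seq 'I_d.+1).
Hypotheses (hl : 3 <= l) (vx : ck_vertex d l x) (vz : ck_vertex d l z).
Local Notation X := (nth ord0 x).
Local Notation Z := (nth ord0 z).

Definition splice (w : nat -> 'I_d.+1) m j :=
  if j < l then X j else if j < l + m then w (j - l) else Z (j - l - m).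

Lemma walk_le_splice w m :
  (forall j, l <= j < 2 * l + m -> fresh_at l (splice w m) j) ->
  walk_le d l (l + m) x z.
Proof.
move=> fresh; have [sx _ _] := (ck_vertexP _ _ _).1 vx.
have [sz _ _] := (ck_vertexP _ _ _).1 vz.
have wx : window d l (splice w m) 0 = x.
  by apply: window_eq => // i hi; rewrite /splice add0n hi.
have wz : window d l (splice w m) (l + m) = z.
  apply: window_eq => // i hi; rewrite /splice.
  have -> : (l + m + i < l) = false by lia.
  have -> : (l + m + i < l + m) = false by lia.
  by have -> : l + m + i - l - m = i by lia.
have := @walk_le_window d l (splice w m) 0 (l + m) (ltnW hl).
rewrite add0n wx wz; apply=> // j hj; apply: fresh; lia.
Qed.

Lemma walk_le_splice_long w :
  (forall i, i < l.-1 -> (w i != X i.+1) && (w i != Z i)) ->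
  (forall i, 0 < i < l.-1 -> w i != w i.-1) ->
  w 0 != X l.-1 -> w l.-2 != Z 0 -> walk_le d l (2 * l - 1) x z.
Proof.
move=> wxz wadj w0 wl; have [_ zadj zwrap] := (ck_vertexP _ _ _).1 vz.
have ne_wx i j : i < l.-1 -> j = i.+1 -> w i != X j by move=> /wxz/andP[? _] ->.
have ne_wz i j : i < l.-1 -> j = i -> w i != Z j by move=> /wxz/andP[_ ?] ->.
have ne_ww i j : 0 < i < l.-1 -> j = i.-1 -> w i != w j by move=> /wadj ? ->.
have ne_w0 i j : i = 0 -> j = l.-1 -> w i != X j by move=> -> ->.
have ne_wl i j : i = l.-2 -> j = 0 -> w i != Z j by move=> -> ->.
have ne_zz i j : i.+1 < l -> j = i.+1 -> Z i != Z j by move=> /zadj ? ->.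
have ne_zwrap i j : i = l.-1 -> j = 0 -> Z i != Z j by move=> -> ->.
have -> : 2 * l - 1 = l + l.-1 by lia.
apply: (walk_le_splice w) => j hj; rewrite /fresh_at /splice.
clear wxz wadj w0 wl zadj zwrap vx vz.
by case_ifs; apply/andP; split; ne_by_index.
Qed.

Lemma walk_le_splice_short w :
  (forall i, i < l.-2 -> (w i != X i.+1) && (w i != Z i.+1)) ->
  (forall i, 0 < i < l.-2 -> w i != w i.-1) ->
  w 0 != X l.-1 -> w l.-2.-1 != Z 0 -> Z 0 != X l.-1 ->
  walk_le d l (2 * l - 1) x z.
Proof.
move=> wxz wadj w0 wl zx; have [_ zadj zwrap] := (ck_vertexP _ _ _).1 vz.
have ne_wx i j : i < l.-2 -> j = i.+1 -> w i != X j by move=> /wxz/andP[? _] ->.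
have ne_wz i j : i < l.-2 -> j = i.+1 -> w i != Z j by move=> /wxz/andP[_ ?] ->.
have ne_ww i j : 0 < i < l.-2 -> j = i.-1 -> w i != w j by move=> /wadj ? ->.
have ne_w0 i j : i = 0 -> j = l.-1 -> w i != X j by move=> -> ->.
have ne_wl i j : i = l.-2.-1 -> j = 0 -> w i != Z j by move=> -> ->.
have ne_zx i j : i = 0 -> j = l.-1 -> Z i != X j by move=> -> ->.
have ne_zz i j : i.+1 < l -> j = i.+1 -> Z i != Z j by move=> /zadj ? ->.
have ne_zwrap i j : i = l.-1 -> j = 0 -> Z i != Z j by move=> -> ->.
apply: (@walk_le_mono _ _ (l + l.-2)); first lia.
apply: (walk_le_splice w) => j hj; rewrite /fresh_at /splice.
clear wxz wadj w0 wl zx zadj zwrap vx vz.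
by case_ifs; apply/andP; split; ne_by_index.
Qed.

Lemma walk_le_upper : 3 <= d -> walk_le d l (2 * l - 1) x z.
Proof.
move=> hd; have [_ zadj _] := (ck_vertexP _ _ _).1 vz.
have [l1_gt0 l2_gt0 l2_predK] : [/\ 0 < l.-1, 0 < l.-2 & l.-2.-1.+1 = l.-2] by split; lia.
have lt_l2 i : i.+1 < l.-1 -> i < l.-2 by lia.
have [cover|] := boolP [|| X l.-1 == X 1, X l.-1 == Z 0 | X 1 == Z 0].
  have [w [wxz wadj w0 wl]] :=
    exists_avoiding_word (fun i => X i.+1) Z (X l.-1) (Z 0) l.-1 hd l1_gt0 cover.
  exact: (walk_le_splice_long w).
rewrite !negb_or => /and3P[x_last_1 x_last_z0 x1_z0].
have [cover|] := boolP [|| X l.-1 == X 1, X l.-1 == Z 1 | X 1 == Z 1].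
  have [w [wxz wadj w0 wl]] := exists_avoiding_word (fun i => X i.+1)
    (fun i => Z i.+1) (X l.-1) (Z 0) l.-2 hd l2_gt0 cover.
  by apply: (walk_le_splice_short w); rewrite // eq_sym.
rewrite !negb_or (negbTE x_last_1) /= => /andP[x_last_z1 x1_z1].
have cover : [|| Z 1 == X 2, Z 1 == Z 1 | X 2 == Z 1] by rewrite eqxx orbT.
have [w [wxz wadj w0 wl]] := exists_avoiding_word (fun i => X i.+2)
  (fun i => Z i.+1) (Z 1) (Z 0) l.-2 hd l2_gt0 cover.
apply: (walk_le_splice_long (fun i => if i is i'.+1 then w i' else Z 1)).
- case=> [|i] hi; last by apply/wxz/lt_l2.
  by rewrite eq_sym x1_z1 eq_sym zadj ?(ltnW hl).
- by case=> [|[|i]] // /andP[_ /lt_l2 hi]; apply: wadj.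
- by rewrite eq_sym.
- by rewrite -l2_predK.
Qed.
End UpperBound.

Definition ck_word d l (f : nat -> nat) : seq 'I_d.+1 := mkseq (fun i => inord (f i)) l.

(* Symbols are read as natural numbers so that lia can reason about them. *)
Definition walk_string d l k (f g cv : nat -> nat) :=
  [/\ forall i, i < l -> cv i = f i, forall i, i < l -> cv (k + i) = g i,
      forall j, l <= j < l + k -> fresh_at l cv j & forall j, cv j <= d].

Section Words.
Variables d l : nat.
Implicit Types f g : nat -> nat.

Lemma ck_vertex_word f : 2 <= l -> (forall i, f i <= d) ->
  (forall i, i.+1 < l -> f i != f i.+1) -> f l.-1 != f 0 -> ck_vertex d l (ck_word d l f).
Proof.
move=> hl fd adj wrap.
have inord_neq a b : f a != f b -> inord (f a) != inord (f b) :> 'I_d.+1.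
  by apply: contra => /eqP/(congr1 val); rewrite /= !inordK ?ltnS // => ->.
apply/ck_vertexP; split; first by rewrite size_mkseq.
  by move=> i hi; rewrite !nth_mkseq; [apply: inord_neq; apply: adj | lia | lia].
by rewrite !nth_mkseq; [apply: inord_neq | lia | lia].
Qed.

Lemma walk_le_word_string k f g : 2 <= l -> (forall i, f i <= d) -> (forall i, g i <= d) ->
  ck_vertex d l (ck_word d l f) -> walk_le d l k (ck_word d l f) (ck_word d l g) ->
  exists2 k', k' <= k & exists cv, walk_string d l k' f g cv.
Proof.
move=> hl fd gd vf /(@walk_le_string d l k _ _ hl vf)[k' le_k'k [c [cf cg fresh]]].
exists k' => //; exists (fun j => nat_of_ord (c j)); split.
- by move=> i hi; rewrite cf // nth_mkseq // inordK // ltnS.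
- by move=> i hi; rewrite cg // nth_mkseq // inordK // ltnS.
- by move=> j /fresh /andP[]; rewrite /fresh_at -!(inj_eq val_inj) => -> ->.
- by move=> j; rewrite -ltnS.
Qed.

Lemma far_words D f g : 2 <= l -> (forall i, f i <= d) -> (forall i, g i <= d) ->
  (forall i, i.+1 < l -> f i != f i.+1) -> f l.-1 != f 0 ->
  (forall i, i.+1 < l -> g i != g i.+1) -> g l.-1 != g 0 ->
  (forall k cv, k < D -> walk_string d l k f g cv -> False) ->
  exists x z, [/\ ck_vertex d l x, ck_vertex d l z &
                  forall k, k < D -> ~ walk_le d l k x z].
Proof.
move=> hl fd gd fadj fwrap gadj gwrap no_string.
have vf := ck_vertex_word f hl fd fadj fwrap.
exists (ck_word d l f), (ck_word d l g); split; rewrite ?(ck_vertex_word g) //.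
move=> k hk /(walk_le_word_string k f g hl fd gd vf)[k' le_k'k [cv string]].
by apply: (no_string k' cv); first exact: leq_ltn_trans hk.
Qed.
End Words.

Section StringFacts.
Variables (l k : nat) (cv : nat -> nat).
Hypothesis fresh : forall j, l <= j < l + k -> fresh_at l cv j.

Lemma fresh_prev j p : l <= j < l + k -> p = j.-1 -> cv j <> cv p.
Proof. by move=> /fresh /andP[/eqP ? _] ->. Qed.

Lemma fresh_second j p : l <= j < l + k -> p = j - l + 1 -> cv j <> cv p.
Proof. by move=> /fresh /andP[_ /eqP ?] ->. Qed.
End StringFacts.

Arguments fresh_prev {l k cv}.
Arguments fresh_second {l k cv}.

Definition odd_far_source l i := if i == l.-1 then 2 else i %% 2.
Definition odd_far_target i := if i == 0 then 2 else i %% 2.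

Section OddLower.
Variables (d l k : nat) (cv : nat -> nat).
Hypotheses (hl : 3 <= l) (l_odd : odd l) (l3_or_d3 : l = 3 \/ d = 3) (hk : k < 2 * l - 1).
Hypotheses (cv_x : forall i, i < l -> cv i = odd_far_source l i)
  (cv_z : forall i, i < l -> cv (k + i) = odd_far_target i)
  (fresh : forall j, l <= j < l + k -> fresh_at l cv j) (bound : forall j, cv j <= d).

Let prev j p : l <= j < l + k -> p = j.-1 -> cv j <> cv p := fresh_prev fresh j p.
Let second j p : l <= j < l + k -> p = j - l + 1 -> cv j <> cv p := fresh_second fresh j p.

Let x_alt i : i < l.-1 -> cv i = i %% 2.
Proof. by move=> hi; rewrite cv_x /odd_far_source ?ifN //; lia. Qed.

Let x_last : cv l.-1 = 2.
Proof. by rewrite cv_x /odd_far_source ?eqxx //; lia. Qed.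

Let z_first p : p = k -> cv p = 2.
Proof. by move=> ->; rewrite -[k]addn0 cv_z //; lia. Qed.

Let z_alt i p : 0 < i < l -> p = k + i -> cv p = i %% 2.
Proof. by move=> hi ->; rewrite cv_z /odd_far_target ?ifN //; lia. Qed.

Lemma odd_gap_le_l : k <= l -> False.
Proof.
move=> hkl; have [k0|k_gt0] := posnP k.
  by have := x_alt 0 (ltac:(lia)); rewrite z_first.
have [kl|kl] := eqVneq k l.
  by apply: (prev l l.-1) => //; [lia | rewrite x_last z_first].
have [kl1|kl1] := eqVneq k l.-1.
  apply: (second l 1); [lia | lia |].
  by rewrite (z_alt 1 l) ?x_alt; lia.
by have := z_alt (l.-1 - k) l.-1 (ltac:(lia)) (ltac:(lia)); rewrite x_last; lia.
Qed.

(* With four symbols, each symbol of the middle block must avoid its predecessor,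
   a symbol of the source and a symbol of the target: it is forced. *)
Lemma odd_middle_forced m : d = 3 -> k = l + m -> ~~ odd m ->
  forall t, t < m -> cv (l + t) = if odd t then 2 else 3.
Proof.
move=> d3 km m_even; elim=> [|t IH] ht.
  have := prev (l + 0) l.-1 (ltac:(lia)) (ltac:(lia)).
  have := second (l + 0) 1 (ltac:(lia)) (ltac:(lia)).
  have := second (k + (l - m - 1)) (l + 0) (ltac:(lia)) (ltac:(lia)).
  rewrite (z_alt (l - m - 1)) ?(x_alt 1) ?x_last //=; try lia.
  by have := bound (l + 0); lia.
have := prev (l + t.+1) (l + t) (ltac:(lia)) (ltac:(lia)).
have := second (l + t.+1) t.+2 (ltac:(lia)) (ltac:(lia)).
have := second (k + (l + t - m)) (l + t.+1) (ltac:(lia)) (ltac:(lia)).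
rewrite (z_alt (l + t - m)) ?(x_alt t.+2) ?IH //; try lia.
by have := bound (l + t.+1); rewrite /=; case: (boolP (odd t)) => /= ot; lia.
Qed.

Lemma odd_gap_gt_l : l < k -> False.
Proof.
move=> lk; have [k2|k2] := eqVneq k (2 * l - 2).
  by apply: (second k l.-1); [lia | lia | rewrite x_last z_first].
have [m km] : exists m, k = l + m by exists (k - l); lia.
have [m_odd|m_even] := boolP (odd m).
  apply: (second k.+1 (m + 2)); [lia | lia |].
  by rewrite (z_alt 1 k.+1) ?x_alt; lia.
have d3 : d = 3 by lia.
apply: (prev k (l + m.-1)); [lia | lia |].
rewrite z_first // (odd_middle_forced m d3 km m_even); last lia.
by case: (boolP (odd m.-1)); lia.
Qed.

Lemma odd_walk_string_false : False.
Proof. by case: (leqP k l); [exact: odd_gap_le_l | exact: odd_gap_gt_l]. Qed.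
End OddLower.

Definition even_far_source l i :=
  if i == l - 1 then 3 else if i == l - 2 then 1 else if i == l - 3 then 2
  else if i == 1 then 1 else if odd i then 3 else 0.
Definition even_far_target l i :=
  if i == 0 then 3 else if i == l - 1 then 1 else if i == 1 then 1
  else if odd i then 3 else 0.

Section EvenLower.
Variables (l k : nat) (cv : nat -> nat).
Hypotheses (hl : 6 <= l) (l_even : ~~ odd l) (hk : k < 2 * l - 1).
Hypotheses (cv_x : forall i, i < l -> cv i = even_far_source l i)
  (cv_z : forall i, i < l -> cv (k + i) = even_far_target l i)
  (fresh : forall j, l <= j < l + k -> fresh_at l cv j) (bound : forall j, cv j <= 3).

Let prev j p : l <= j < l + k -> p = j.-1 -> cv j <> cv p := fresh_prev fresh j p.
Let second j p : l <= j < l + k -> p = j - l + 1 -> cv j <> cv p := fresh_second fresh j p.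

Let x_even i : i < l - 3 -> ~~ odd i -> cv i = 0.
Proof. by move=> *; rewrite cv_x /even_far_source; case_ifs; lia. Qed.
Let x_odd i : 3 <= i < l - 3 -> odd i -> cv i = 3.
Proof. by move=> *; rewrite cv_x /even_far_source; case_ifs; lia. Qed.
Let x_1 : cv 1 = 1.
Proof. by rewrite cv_x /even_far_source; case_ifs; lia. Qed.
Let x_l3 : cv (l - 3) = 2.
Proof. by rewrite cv_x /even_far_source; case_ifs; lia. Qed.
Let x_l2 : cv (l - 2) = 1.
Proof. by rewrite cv_x /even_far_source; case_ifs; lia. Qed.
Let x_l1 : cv (l - 1) = 3.
Proof. by rewrite cv_x /even_far_source; case_ifs; lia. Qed.

Let z_at i p : i < l -> p = k + i -> cv p = even_far_target l i.
Proof. by move=> hi ->; apply: cv_z. Qed.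
Let z_even i p : 2 <= i < l - 1 -> ~~ odd i -> p = k + i -> cv p = 0.
Proof. by move=> hi ? /z_at ->; [rewrite /even_far_target; case_ifs; lia | lia]. Qed.
Let z_odd i p : 3 <= i < l - 1 -> odd i -> p = k + i -> cv p = 3.
Proof. by move=> hi ? /z_at ->; [rewrite /even_far_target; case_ifs; lia | lia]. Qed.
Let z_0 p : p = k -> cv p = 3.
Proof. by move=> hp; rewrite (z_at 0 p) //; lia. Qed.
Let z_1 p : p = k + 1 -> cv p = 1.
Proof. by move=> /z_at ->; [rewrite /even_far_target; case_ifs; lia | lia]. Qed.

Lemma even_gap_le_l : k <= l -> False.
Proof.
move=> hkl; have [k0|k_gt0] := posnP k.
  by have := x_even 0 (ltac:(lia)) isT; rewrite z_0.
have [kl|kl] := eqVneq k l.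
  by apply: (prev l (l - 1)); [lia | lia | rewrite x_l1 z_0].
have [kl1|kl1] := eqVneq k (l - 1).
  by apply: (second l 1); [lia | lia | rewrite x_1 z_1; lia].
have := z_at (l - 1 - k) (l - 1) (ltac:(lia)) (ltac:(lia)); rewrite x_l1.
rewrite /even_far_target; case_ifs; try lia; move=> _.
by have := z_even (l - 2 - k) (l - 2) (ltac:(lia)) (ltac:(lia)) (ltac:(lia)); rewrite x_l2.
Qed.

Lemma even_middle_forced : k = 2 * l - 3 ->
  forall t, t < l - 4 -> cv (l + t) = if odd t then 1 else 2.
Proof.
move=> km; elim=> [|t IH] ht.
  have := prev (l + 0) (l - 1) (ltac:(lia)) (ltac:(lia)).
  have := second (l + 0) 1 (ltac:(lia)) (ltac:(lia)).
  have := second (k + 2) (l + 0) (ltac:(lia)) (ltac:(lia)).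
  rewrite x_l1 x_1 (z_even 2 (k + 2)) //=; try lia.
  by have := bound (l + 0); lia.
have := prev (l + t.+1) (l + t) (ltac:(lia)) (ltac:(lia)).
have := second (l + t.+1) t.+2 (ltac:(lia)) (ltac:(lia)).
have := second (k + t.+3) (l + t.+1) (ltac:(lia)) (ltac:(lia)).
rewrite IH /=; last lia.
have := bound (l + t.+1); case: (boolP (odd t)) => /= t_odd.
  by rewrite (x_odd t.+2) ?(z_even t.+3 (k + t.+3)) //=; lia.
by rewrite (x_even t.+2) ?(z_odd t.+3 (k + t.+3)) //=; lia.
Qed.

Lemma even_gap_gt_l : l < k -> False.
Proof.
move=> lk; have [k2|k2] := eqVneq k (2 * l - 2).
  by apply: (second k (l - 1)); [lia | lia | rewrite x_l1 z_0].
have [m km] : exists m, k = l + m by exists (k - l); lia.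
have [m_even_small|[m_l4|[m_odd_small|[m_l5|m_l3]]]] :
    (~~ odd m /\ m <= l - 6) \/ m = l - 4 \/ (odd m /\ m <= l - 7) \/ m = l - 5 \/ m = l - 3.
  by lia.
- apply: (second k (m + 1)); [lia | lia |].
  by rewrite z_0 // (x_odd (m + 1)); lia.
- by apply: (second (k + 1) (l - 2)); [lia | lia | rewrite x_l2 z_1].
- apply: (second (k + 2) (m + 3)); [lia | lia |].
  by rewrite (z_even 2 (k + 2)) ?(x_even (m + 3)); lia.
- apply: (second (k + 3) (l - 1)); [lia | lia |].
  by rewrite (z_odd 3 (k + 3)) ?x_l1; lia.
have := prev (l + (l - 4)) (l + (l - 5)) (ltac:(lia)) (ltac:(lia)).
have := second (l + (l - 4)) (l - 3) (ltac:(lia)) (ltac:(lia)).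
have := second (k + (l - 2)) (l + (l - 4)) (ltac:(lia)) (ltac:(lia)).
have := prev k (l + (l - 4)) (ltac:(lia)) (ltac:(lia)).
rewrite z_0 // x_l3 (z_even (l - 2) (k + (l - 2))) ?(even_middle_forced _ (l - 5)); try lia.
by have := bound (l + (l - 4)); rewrite ifT; lia.
Qed.

Lemma even_walk_string_false : False.
Proof. by case: (leqP k l); [exact: even_gap_le_l | exact: even_gap_gt_l]. Qed.
End EvenLower.

Lemma ck_far_pair_odd d l : 3 <= d -> 3 <= l -> odd l -> l = 3 \/ d = 3 ->
  exists x z, [/\ ck_vertex d l x, ck_vertex d l z &
                  forall k, k < 2 * l - 1 -> ~ walk_le d l k x z].
Proof.
move=> hd hl l_odd l3_or_d3.
apply: (@far_words d l _ (odd_far_source l) odd_far_target); first lia;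
  rewrite /odd_far_source /odd_far_target; try by move=> * /=; case_ifs; lia.
move=> k cv hk [cv_x cv_z fresh bound].
exact: (odd_walk_string_false _ _ _ _ hl l_odd l3_or_d3 hk cv_x cv_z fresh bound).
Qed.

Lemma ck_far_pair_even l : 6 <= l -> ~~ odd l ->
  exists x z, [/\ ck_vertex 3 l x, ck_vertex 3 l z &
                  forall k, k < 2 * l - 1 -> ~ walk_le 3 l k x z].
Proof.
move=> hl l_even.
apply: (@far_words 3 l _ (even_far_source l) (even_far_target l)); first lia;
  rewrite /even_far_source /even_far_target; try by move=> * /=; case_ifs; lia.
move=> k cv hk [cv_x cv_z fresh bound].
exact: (even_walk_string_false _ _ _ hl l_even hk cv_x cv_z fresh bound).
Qed.

Lemma ck_diameter_far_pair d l : 3 <= d -> 3 <= l ->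
  (exists x z, [/\ ck_vertex d l x, ck_vertex d l z &
                   forall k, k < 2 * l - 1 -> ~ walk_le d l k x z]) ->
  ck_diameter d l (2 * l - 1).
Proof. by move=> hd hl far; split=> // x z vx vz; apply: walk_le_upper. Qed.

Section Reach.
Variables (d l : nat) (alphabet : seq 'I_d.+1).
Hypothesis alphabet_full : forall y, y \in alphabet.
Implicit Types x z w : seq 'I_d.+1.

Definition ck_succs x :=
  [seq w <- [seq rcons (behead x) y | y <- alphabet & (y != nth ord0 x 1) && (y != nth ord0 x l.-1)]
   | ck_vertex d l x && ck_vertex d l w].

Lemma mem_ck_succs x w : (w \in ck_succs x) = ck_arc d l x w.
Proof.
rewrite mem_filter /ck_arc -andbA; do 2 congr andb.
apply/mapP/existsP => [[y] | [y /and3P[y1 yl /eqP ->]]].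
  by rewrite mem_filter => /andP[/andP[y1 yl] _] ->; exists y; rewrite y1 yl eqxx.
by exists y; rewrite // mem_filter y1 yl alphabet_full.
Qed.

Fixpoint reach k x :=
  if k is k'.+1 then x :: flatten [seq reach k' w | w <- ck_succs x] else [:: x].

Lemma walk_le_reach k x z : walk_le d l k x z <-> z \in reach k x.
Proof.
elim: k x => [|k IH] x /=; first by rewrite inE; split=> [->|/eqP ->].
rewrite inE; split=> [[->|[w [xw /IH wz]]]|/orP[/eqP ->|/flattenP[r /mapP[w xw ->] /IH wz]]].
- by rewrite eqxx.
- by apply/orP; right; apply/flattenP; exists (reach k w); [apply: map_f; rewrite mem_ck_succs|].
- by left.
- by right; exists w; rewrite -mem_ck_succs.
Qed.

Fixpoint words n : seq (seq 'I_d.+1) :=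
  if n is n'.+1 then [seq a :: s | a <- alphabet, s <- words n'] else [:: [::]].

Lemma mem_words x : x \in words (size x).
Proof. by elim: x => [|a x IH] //=; apply/allpairsP; exists (a, x). Qed.

Definition ck_vertices := [seq x <- words l | ck_vertex d l x].

(* The [let] makes [reach k x] computed once per [x] rather than once per [z]. *)
Lemma walk_le_all_reach k :
  all (fun x => let R := reach k x in all (fun z => z \in R) ck_vertices) ck_vertices ->
  forall x z, ck_vertex d l x -> ck_vertex d l z -> walk_le d l k x z.
Proof.
have mem_vertices x : ck_vertex d l x -> x \in ck_vertices.
  by move=> vx; have [sx _ _] := (ck_vertexP _ _ _).1 vx; rewrite mem_filter vx -sx mem_words.
move=> /allP all_reach x z /mem_vertices vx /mem_vertices vz.
by apply/walk_le_reach; move/allP: (all_reach x vx); apply.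
Qed.
End Reach.

Definition alphabet4 : seq 'I_4 :=
  [:: @Ordinal 4 0 isT; @Ordinal 4 1 isT; @Ordinal 4 2 isT; @Ordinal 4 3 isT].

Lemma alphabet4_full y : y \in alphabet4.
Proof. by case: y => [[|[|[|[|n]]]] hn]. Qed.

Lemma ck_diameter_3_4 : ck_diameter 3 4 6.
Proof.
split; first by apply: (@walk_le_all_reach 3 4 _ alphabet4_full); vm_compute.
pose x : seq 'I_4 := [:: @Ordinal 4 0 isT; @Ordinal 4 1 isT; @Ordinal 4 0 isT; @Ordinal 4 1 isT].
pose z : seq 'I_4 := [:: @Ordinal 4 0 isT; @Ordinal 4 2 isT; @Ordinal 4 1 isT; @Ordinal 4 2 isT].
exists x, z; split; try by vm_compute.
move=> k hk /(@walk_le_mono 3 4 k 5 _ _ hk) /(@walk_le_reach 3 4 _ alphabet4_full).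
by vm_compute.
Qed.

Theorem proposition1 :
  ((forall l : nat, 3 <= l -> l != 4 -> ck_diameter 3 l (2 * l - 1)) /\
   (forall d : nat, 3 <= d -> ck_diameter d 3 (2 * 3 - 1))) /\
  ck_diameter 3 4 6.
Proof.
split; [split|exact: ck_diameter_3_4].
- move=> l hl l4; apply: ck_diameter_far_pair => //.
  have [l_odd|l_even] := boolP (odd l).
    exact: ck_far_pair_odd (or_intror erefl).
  by apply: ck_far_pair_even; lia.
- move=> d hd; apply: ck_diameter_far_pair => //.
  exact: ck_far_pair_odd (or_introl erefl).
Qed.
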